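(* Let $V,V'$ be finite-dimensional $\mathfrak l_m$-modules on which $E_x$ acts by scalars $c$ and $c'$ respectively. Then $\mathrm{Hom}_{\mathfrak b_m}(\mathcal F(V),\mathcal F(V'))=0$ unless $c'-c\in\mathbb N$, and if $c'-c\in\mathbb N$ it is isomorphic to the space of $\mathfrak l_m$-invariants $\bigl[\mathbb C[\partial_x]_{(c-c')}\otimes\mathrm{Hom}(V,V')\bigr]^{\mathfrak l_m}$, where $\mathbb C[\partial_x]_{(c-c')}$ denotes the homogeneous polynomials of degree $c'-c$ in $\partial_{x_1},\dots,\partial_{x_m}$.
   Context: $\mathrm{Vec}\,\mathbb R^m$ is the Lie algebra of complex polynomial vector fields on $\mathbb R^m$; $E_x=\sum_r x_r\partial_{x_r}$; $\mathfrak b_m=\mathrm{Span}\{\partial_{x_i},x_j\partial_{x_i}\}$, $\mathfrak l_m=\mathrm{Span}\{x_j\partial_{x_i}\}$. For a finite-dimensional $\mathfrak l_m$-representation $(\phi,V)$, $\mathcal F(V)=\mathbb C[x]\otimes V$ with $\mathrm{Lie}_\phi(X)h=\sum_jX_j\partial_{x_j}h+\sum_{i,j}(\partial_{x_i}X_j)\phi(x_i\partial_{x_j})h$. The algebra $\mathbb C[\partial_x]$ of constant-coefficient differential operators is an $\mathfrak l_m$-module via commutators, $\mathrm{Hom}(V,V')$ via $Y\cdot\tau=\phi'(Y)\tau-\tau\phi(Y)$, and their tensor product via the diagonal action. *)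

From HB Require Import structures.
From mathcomp Require Import all_boot all_order all_algebra.
Set Implicit Arguments. Unset Strict Implicit. Unset Printing Implicit Defensive.
Import GRing.Theory Num.Theory.
Local Open Scope ring_scope.

(* Multi-indices (exponent vectors) for monomials in m variables:
   x^e = prod_k x_k^(e k), resp. \partial^e = prod_k \partial_{x_k}^(e k). *)
Definition exps (m : nat) := {ffun 'I_m -> nat}.
Definition inc m (i : 'I_m) (e : exps m) : exps m := [ffun k => (e k + (k == i))%N].
Definition dec m (i : 'I_m) (e : exps m) : exps m := [ffun k => (e k - (k == i))%N].
Definition deg m (e : exps m) : nat := (\sum_(k < m) e k)%N.

(* An l_m-representation on V = C^n (column vectors), given on the basis:
   phi i j = phi(x_i \partial_{x_j}); condition: phi is a Lie algebra map, with
   [x_i d_j, x_k d_l] = delta_{jk} x_i d_l - delta_{li} x_k d_j. *)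
Definition is_lm_rep (C : fieldType) m n (phi : 'I_m -> 'I_m -> 'M[C]_n) : Prop :=
  forall i j k l : 'I_m,
    phi i j *m phi k l - phi k l *m phi i j
    = (j == k)%:R *: phi i l - (l == i)%:R *: phi k j.

(* F(V) = C[x] (x) V : an element h is its coefficient function e |-> coefficient
   of x^e (a vector of V), required to have finite support. *)
Definition fsupp (C : fieldType) m n (f : exps m -> 'cV[C]_n) : Prop :=
  exists s : seq (exps m), forall e, f e != 0 -> e \in s.

Definition dx (C : fieldType) m n (j : 'I_m) (h : exps m -> 'cV[C]_n)
  : exps m -> 'cV[C]_n :=
  fun e => (e j).+1%:R *: h (inc j e).

Definition mulx (C : fieldType) m n (i : 'I_m) (h : exps m -> 'cV[C]_n)
  : exps m -> 'cV[C]_n :=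
  fun e => if (0 < e i)%N then h (dec i e) else 0.

(* Lie_phi(\partial_{x_k}) = \partial_{x_k};
   Lie_phi(x_i \partial_{x_j}) h = x_i \partial_{x_j} h + phi(x_i \partial_{x_j}) h *)
Definition lie_xd (C : fieldType) m n (phi : 'I_m -> 'I_m -> 'M[C]_n)
  (i j : 'I_m) (h : exps m -> 'cV[C]_n) : exps m -> 'cV[C]_n :=
  fun e => mulx i (dx j h) e + phi i j *m h e.

(* T : F(V) -> F(V') is a b_m-module homomorphism (C-linear, commuting with the
   actions of the basis \partial_{x_k}, x_i \partial_{x_j} of b_m).  T is given on
   all coefficient functions, but only its restriction to F(V) matters. *)
Definition is_bhom (C : fieldType) m n n'
  (phi : 'I_m -> 'I_m -> 'M[C]_n) (phi' : 'I_m -> 'I_m -> 'M[C]_n')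
  (T : (exps m -> 'cV[C]_n) -> (exps m -> 'cV[C]_n')) : Prop :=
  [/\ forall f, fsupp f -> fsupp (T f),
      forall (a : C) f g, fsupp f -> fsupp g ->
        forall e, T (fun e0 => a *: f e0 + g e0) e = a *: T f e + T g e,
      forall k f, fsupp f -> forall e, T (dx k f) e = dx k (T f) e
    & forall i j f, fsupp f -> forall e, T (lie_xd phi i j f) e = lie_xd phi' i j (T f) e].

(* Elements of C[\partial_x] (x) W, W a vector space, as coefficient functions
   t : exps m -> W (t a = coefficient of \partial^a).  Action of x_i \partial_{x_j}
   on C[\partial_x] by commutators: [x_i d_j, \partial^a] = - a_i \partial^(a - e_i + e_j);
   hence the coefficient of \partial^b in (x_i d_j) . t is as below. *)
Definition dop_act (C : fieldType) (W : lmodType C) m (i j : 'I_m)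
  (t : exps m -> W) : exps m -> W :=
  fun b => - (if (0 < b j)%N then (dec j b i).+1%:R *: t (inc i (dec j b)) else 0).

Definition hom_act (C : fieldType) m n n'
  (phi : 'I_m -> 'I_m -> 'M[C]_n) (phi' : 'I_m -> 'I_m -> 'M[C]_n')
  (i j : 'I_m) (tau : 'M[C]_(n', n)) : 'M[C]_(n', n) :=
  phi' i j *m tau - tau *m phi i j.

Definition tensor_act (C : fieldType) m n n'
  (phi : 'I_m -> 'I_m -> 'M[C]_n) (phi' : 'I_m -> 'I_m -> 'M[C]_n')
  (i j : 'I_m) (t : exps m -> 'M[C]_(n', n)) : exps m -> 'M[C]_(n', n) :=
  fun b => dop_act i j t b + hom_act phi phi' i j (t b).

Definition is_invariant (C : fieldType) m n n'
  (phi : 'I_m -> 'I_m -> 'M[C]_n) (phi' : 'I_m -> 'I_m -> 'M[C]_n')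
  (d : nat) (t : exps m -> 'M[C]_(n', n)) : Prop :=
  (forall a, deg a != d -> t a = 0) /\
  (forall i j b, tensor_act phi phi' i j t b = 0).

From HB Require Import structures.
From mathcomp Require Import all_boot all_order all_algebra.
From mathcomp Require Import ring zify.
From Stdlib Require Import FunctionalExtensionality.
Import GRing.Theory Num.Theory.
Local Open Scope ring_scope.
Set Implicit Arguments. Unset Strict Implicit. Unset Printing Implicit Defensive.

(* A b_m-homomorphism T commutes with every \partial_{x_k}, so it is determined
   by the constant terms (T f)(0), i.e. by the matrices t_a with
   a! t_a v = (T (x^a v))(0).  Then T is the constant-coefficient operator
   \sum_a t_a \partial^a.  The Euler field \sum_r x_r \partial_{x_r} acts on
   x^a V by deg a + c and on constants of F(V') by c', so t_a = 0 unless
   deg a = c' - c; commuting with x_i \partial_{x_j} amounts, at the origin, to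
   the l_m-invariance of t.  Conversely every invariant t of degree d defines
   a b_m-homomorphism, and t is recovered from it by the formula above. *)

Section MultiIndices.
Variable m : nat.
Implicit Types (e a b x : exps m) (i j k : 'I_m).

Definition exps0 : exps m := [ffun _ => 0%N].
Definition exps_add e a : exps m := [ffun k => (e k + a k)%N].
Definition exps_sub e a : exps m := [ffun k => (e k - a k)%N].
Definition efact e : nat := (\prod_(k < m) (e k)`!)%N.

Definition exps_deg (d : nat) : seq (exps m) :=
  [seq a <- undup [seq [ffun k => val (y k)] | y : {ffun 'I_m -> 'I_d.+1}]
   | deg a == d].

Lemma incE i e k : inc i e k = (e k + (k == i))%N.
Proof. by rewrite ffunE. Qed.

Lemma decE i e k : dec i e k = (e k - (k == i))%N.
Proof. by rewrite ffunE. Qed.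

Lemma incK i : cancel (inc i) (dec i).
Proof. by move=> e; apply/ffunP=> k; rewrite decE incE addnK. Qed.

Lemma decK i e : (0 < e i)%N -> inc i (dec i e) = e.
Proof.
move=> ei; apply/ffunP=> k; rewrite incE decE.
by case: eqP=> [->|_]; [rewrite subnK | rewrite subn0 addn0].
Qed.

Lemma inc_gt0 i e : (0 < inc i e i)%N.
Proof. by rewrite incE eqxx addn1. Qed.

Lemma incC i j e : inc i (inc j e) = inc j (inc i e).
Proof. by apply/ffunP=> k; rewrite !incE addnAC. Qed.

Lemma dec_incC i k e : k != i -> dec i (inc k e) = inc k (dec i e).
Proof.
move=> ki; apply/ffunP=> k'; rewrite !(incE, decE).
case: (eqVneq k' i)=> [->|_]; last by rewrite !subn0.
by rewrite eq_sym (negbTE ki) !addn0.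
Qed.

Lemma deg_inc i e : deg (inc i e) = (deg e).+1.
Proof.
rewrite /deg (bigD1 i) //= [in RHS](bigD1 i) //= incE eqxx addn1 addSn.
by congr (_ + _).+1; apply: eq_bigr=> k /negbTE ki; rewrite incE ki addn0.
Qed.

Lemma deg_dec i e : (0 < e i)%N -> deg e = (deg (dec i e)).+1.
Proof. by move=> ei; rewrite -(deg_inc i) decK. Qed.

Lemma leq_deg e k : (e k <= deg e)%N.
Proof. by rewrite /deg (bigD1 k) //= leq_addr. Qed.

Lemma exps0_or_gt0 e : e = exps0 \/ exists k, (0 < e k)%N.
Proof.
case: (pickP (fun k => 0 < e k)%N)=> [k ek|e0]; first by right; exists k.
by left; apply/ffunP=> k; rewrite ffunE; apply/eqP; rewrite -leqn0 leqNgt e0.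
Qed.

Lemma efact_inc i e : efact (inc i e) = (efact e * (e i).+1)%N.
Proof.
rewrite /efact (bigD1 i) //= [in RHS](bigD1 i) //= incE eqxx addn1 factS.
under eq_bigr=> k /negbTE ki do rewrite incE ki addn0.
by ring.
Qed.

Lemma efact_gt0 e : (0 < efact e)%N.
Proof. by rewrite prodn_gt0 // => k; rewrite fact_gt0. Qed.

Lemma efact0 : efact exps0 = 1%N.
Proof. by rewrite /efact big1 // => k _; rewrite ffunE. Qed.

Lemma add0exps a : exps_add exps0 a = a.
Proof. by apply/ffunP=> k; rewrite !ffunE. Qed.

Lemma inc_exps_add k e a : inc k (exps_add e a) = exps_add (inc k e) a.
Proof. by apply/ffunP=> k'; rewrite !(incE, ffunE) addnAC. Qed.

Lemma exps_addK a : cancel (exps_add^~ a) (exps_sub^~ a).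
Proof. by move=> e; apply/ffunP=> k; rewrite !ffunE addnK. Qed.

Lemma exps_deg_uniq d : uniq (exps_deg d).
Proof. by rewrite filter_uniq // undup_uniq. Qed.

Lemma mem_exps_deg d a : (a \in exps_deg d) = (deg a == d).
Proof.
rewrite mem_filter mem_undup; case: eqP=> //= <-.
apply/mapP; exists [ffun k => (inord (a k) : 'I_(deg a).+1)]; first exact: mem_enum.
by apply/ffunP=> k; rewrite !ffunE inordK // ltnS leq_deg.
Qed.

Lemma big_exps_deg_dec (V : nmodType) d i j (G : exps m -> V) :
  \sum_(a <- exps_deg d | (0 < a i)%N) G (dec i a) =
  \sum_(a <- exps_deg d | (0 < a j)%N) G (dec j a).
Proof.
have decS k : perm_eq [seq dec k a | a <- exps_deg d & (0 < a k)%N]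
                      [seq x <- exps_deg d.-1 | (deg x).+1 == d].
  apply: uniq_perm=> [||x].
  - rewrite map_inj_in_uniq=> [|a b]; first exact/filter_uniq/exps_deg_uniq.
    by rewrite !mem_filter=> /andP[ak _] /andP[bk _] ab; rewrite -(decK ak) ab decK.
  - exact/filter_uniq/exps_deg_uniq.
  rewrite mem_filter mem_exps_deg; apply/mapP/idP=> [[a]|/andP[/eqP xd _]].
    rewrite mem_filter mem_exps_deg=> /andP[ak /eqP <-] ->.
    by rewrite (deg_dec ak) !eqxx.
  exists (inc k x); last by rewrite incK.
  by rewrite mem_filter mem_exps_deg inc_gt0 deg_inc xd eqxx.
rewrite -big_filter -[RHS]big_filter.
rewrite -(big_map (dec i) xpredT G) -(big_map (dec j) xpredT G).
by rewrite (perm_big _ (decS i)) (perm_big _ (decS j)).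
Qed.

End MultiIndices.

Lemma big_uniq_pred1 (V : nmodType) (T : eqType) (s : seq T) b (F : T -> V) :
  uniq s -> \sum_(a <- s | a == b) F a = if b \in s then F b else 0.
Proof.
elim: s=> [|x s IH] /=; first by rewrite big_nil.
case/andP=> xs us; rewrite big_cons IH // in_cons eq_sym.
by case: eqP=> [->|_] /=; rewrite ?(negbTE xs) ?addr0.
Qed.

Lemma eq_big_supp_uniq (V : nmodType) (T : eqType) (s1 s2 : seq T) (F : T -> V) :
  uniq s1 -> uniq s2 ->
  (forall a, F a != 0 -> a \in s1) -> (forall a, F a != 0 -> a \in s2) ->
  \sum_(a <- s1) F a = \sum_(a <- s2) F a.
Proof.
move=> u1 u2 h1 h2.
rewrite (bigID [pred a | a \in s2]) /= [X in _ + X]big1 => [|a /= a2]; last first.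
  by apply/eqP; apply: contraR a2; apply: h2.
rewrite addr0 [RHS](bigID [pred a | a \in s1]) /= [X in _ + X]big1 => [|a /= a1]; last first.
  by apply/eqP; apply: contraR a1; apply: h1.
rewrite addr0 -big_filter -[RHS]big_filter; apply/perm_big/uniq_perm.
- exact: filter_uniq.
- exact: filter_uniq.
by move=> a; rewrite !mem_filter andbC.
Qed.

Lemma mulmx_cV_eq0 (C : fieldType) p q (A : 'M[C]_(p, q)) :
  (forall v : 'cV[C]_q, A *m v = 0) -> A = 0.
Proof.
move=> Av0; apply/matrixP=> r s; have := Av0 (delta_mx s 0).
by rewrite -colE=> /matrixP /(_ r 0); rewrite !mxE.
Qed.

Section FiniteSupport.
Variables (C : fieldType) (m n : nat).
Implicit Types (f g : exps m -> 'cV[C]_n).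

Definition monomial (a : exps m) (v : 'cV[C]_n) : exps m -> 'cV[C]_n :=
  fun e => if e == a then v else 0.

Lemma fsupp_map (h : exps m -> exps m) n1 n2
    (f : exps m -> 'cV[C]_n1) (g : exps m -> 'cV[C]_n2) :
  fsupp f -> (forall e, g e != 0 -> exists2 e', f e' != 0 & e = h e') -> fsupp g.
Proof. by case=> s fs gf; exists (map h s)=> e /gf [e' /fs e's ->]; apply: map_f. Qed.

Lemma fsupp_sub n1 n2 (f : exps m -> 'cV[C]_n1) (g : exps m -> 'cV[C]_n2) :
  fsupp f -> (forall e, g e != 0 -> f e != 0) -> fsupp g.
Proof. by move=> fs gf; apply: (fsupp_map (h := id) fs)=> e /gf; exists e. Qed.

Lemma fsupp0 : fsupp (fun _ : exps m => (0 : 'cV[C]_n)).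
Proof. by exists [::]=> e; rewrite eqxx. Qed.

Lemma fsuppD f g : fsupp f -> fsupp g -> fsupp (fun e => f e + g e).
Proof.
case=> s1 h1 [s2 h2]; exists (s1 ++ s2)=> e fge; rewrite mem_cat.
have [f0|/h1 -> //] := eqVneq (f e) 0.
by rewrite h2 ?orbT //; move: fge; rewrite f0 add0r.
Qed.

Lemma fsuppZ a f : fsupp f -> fsupp (fun e => a *: f e).
Proof. by move=> fs; apply: (fsupp_sub fs)=> e; apply: contra=> /eqP ->; rewrite scaler0. Qed.

Lemma fsupp_mulmx n1 (M : 'M[C]_(n1, n)) f : fsupp f -> fsupp (fun e => M *m f e).
Proof. by move=> fs; apply: (fsupp_sub fs)=> e; apply: contra=> /eqP ->; rewrite mulmx0. Qed.

Lemma fsupp_sum (I : Type) (r : seq I) (F : I -> exps m -> 'cV[C]_n) :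
  (forall x, fsupp (F x)) -> fsupp (fun e => \sum_(x <- r) F x e).
Proof.
move=> Fs; elim: r=> [|x r IH].
  by apply: (fsupp_sub fsupp0)=> e; rewrite big_nil.
by apply: (fsupp_sub (fsuppD (Fs x) IH))=> e; rewrite big_cons.
Qed.

Lemma fsupp_monomial a v : fsupp (monomial a v).
Proof. by exists [:: a]=> e; rewrite /monomial inE; case: (e == a)=> //; rewrite eqxx. Qed.

Lemma monomial0 a : monomial a 0 = fun _ => 0.
Proof. by apply: functional_extensionality=> e; rewrite /monomial; case: ifP. Qed.

Lemma fsupp_dx k f : fsupp f -> fsupp (dx k f).
Proof.
move=> fs; apply: (fsupp_map (h := dec k) fs)=> e dxf; exists (inc k e).
  by apply: contra dxf=> /eqP f0; rewrite /dx f0 scaler0.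
by rewrite incK.
Qed.

Lemma fsupp_mulx i f : fsupp f -> fsupp (mulx i f).
Proof.
move=> fs; apply: (fsupp_map (h := inc i) fs)=> e; rewrite /mulx.
by case: ifP=> [ei xf|]; [exists (dec i e); rewrite ?decK | rewrite eqxx].
Qed.

Lemma fsupp_lie_xd (phi : 'I_m -> 'I_m -> 'M[C]_n) i j f :
  fsupp f -> fsupp (lie_xd phi i j f).
Proof. by move=> fs; apply: fsuppD; [apply/fsupp_mulx/fsupp_dx | apply: fsupp_mulmx]. Qed.

End FiniteSupport.

Definition fsupp_linear (C : fieldType) m n n'
    (T : (exps m -> 'cV[C]_n) -> exps m -> 'cV[C]_n') :=
  forall (a : C) f g, fsupp f -> fsupp g ->
    forall e, T (fun e0 => a *: f e0 + g e0) e = a *: T f e + T g e.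

Definition commutes_dx (C : fieldType) m n n'
    (T : (exps m -> 'cV[C]_n) -> exps m -> 'cV[C]_n') :=
  forall k f, fsupp f -> forall e, T (dx k f) e = dx k (T f) e.

Section LinearOnFiniteSupport.
Variables (C : fieldType) (m n n' : nat).
Variable T : (exps m -> 'cV[C]_n) -> exps m -> 'cV[C]_n'.
Hypothesis linT : fsupp_linear T.

Lemma flinear0 e : T (fun _ => 0) e = 0.
Proof.
have := linT 1 (@fsupp0 C m n) (@fsupp0 C m n) e.
have -> : (fun _ : exps m => 1 *: (0 : 'cV[C]_n) + 0) = fun _ => 0.
  by apply: functional_extensionality=> ?; rewrite scale1r addr0.
by rewrite scale1r=> /esym/eqP; rewrite -subr_eq0 addrK=> /eqP.
Qed.

Lemma flinearZ a f : fsupp f -> forall e, T (fun e0 => a *: f e0) e = a *: T f e.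
Proof.
move=> fs e; have := linT a fs (@fsupp0 C m n) e; rewrite flinear0 addr0=> <-.
by congr (T _ e); apply: functional_extensionality=> e0; rewrite addr0.
Qed.

Lemma flinear_sum (I : Type) (r : seq I) (a : I -> C) (F : I -> exps m -> 'cV[C]_n) :
  (forall x, fsupp (F x)) ->
  forall e, T (fun e0 => \sum_(x <- r) a x *: F x e0) e = \sum_(x <- r) a x *: T (F x) e.
Proof.
move=> Fs e; elim: r=> [|x r IH].
  rewrite big_nil -(flinear0 e); congr (T _ e).
  by apply: functional_extensionality=> ?; rewrite big_nil.
rewrite big_cons -IH -linT //; last by apply: fsupp_sum=> y; apply: fsuppZ.
by congr (T _ e); apply: functional_extensionality=> ?; rewrite big_cons.
Qed.

Lemma flinear_monomials g : fsupp g -> exists s, [/\ uniq s,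
  forall a, g a != 0 -> a \in s & forall e, T g e = \sum_(a <- s) T (monomial a (g a)) e].
Proof.
case=> s0 gs0; exists (undup s0); split=> [||e]; first exact: undup_uniq.
  by move=> a /gs0; rewrite mem_undup.
have gE : g = fun e0 => \sum_(a <- undup s0) 1 *: monomial a (g a) e0.
  apply: functional_extensionality=> e0.
  under eq_bigr do rewrite scale1r /monomial eq_sym.
  rewrite -big_mkcond big_uniq_pred1 ?undup_uniq // mem_undup.
  by case: ifP=> // /negbT s0e; apply/eqP; apply: contraR s0e; apply: gs0.
rewrite {1}gE flinear_sum => [|a]; last exact: fsupp_monomial.
by apply: eq_bigr=> a _; rewrite scale1r.
Qed.

End LinearOnFiniteSupport.

Lemma commutes_dx_eq0 (C : numFieldType) m n n'
    (U : (exps m -> 'cV[C]_n) -> exps m -> 'cV[C]_n') :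
  commutes_dx U -> (forall g, fsupp g -> U g (exps0 m) = 0) ->
  forall g, fsupp g -> forall e, U g e = 0.
Proof.
(* By induction on deg e, using (U (\partial_{x_k} g))_(e - e_k) = e_k (U g)_e. *)
move=> Udx U0 g gs e; move: {2}(deg e) (erefl (deg e))=> N.
elim: N g gs e=> [|N IH] g gs e degN.
  have [->|[k ek]] := exps0_or_gt0 e; first exact: U0.
  by move: (leq_deg e k); rewrite degN leqNgt ek.
have [e0|[k ek]] := exps0_or_gt0 e; first by rewrite e0 U0.
have := Udx k g gs (dec k e).
rewrite (IH _ (fsupp_dx k gs)); last by move: degN; rewrite (deg_dec ek)=> -[].
rewrite /dx decK // decE eqxx subn1 prednK // => /esym/eqP.
by rewrite scaler_eq0 pnatr_eq0 (negbTE (lt0n_neq0 ek))=> /eqP.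
Qed.

Section DerivativeCalculus.
Variables (C : fieldType) (m n : nat).
Implicit Types (h : exps m -> 'cV[C]_n) (phi : 'I_m -> 'I_m -> 'M[C]_n).

Lemma dx_lie_xd phi i j k h e :
  dx k (lie_xd phi i j h) e = lie_xd phi i j (dx k h) e + (k == i)%:R *: dx j h e.
Proof.
rewrite /lie_xd /dx /mulx scalerDr scalemxAr [in RHS]addrAC; congr (_ + _).
have [->|ki] := eqVneq k i.
  rewrite inc_gt0 incK scale1r; have [-> | ei] := posnP (e i); first by rewrite scale1r add0r.
  rewrite incC decK // !scalerA -scalerDl -!natrM -natrD.
  by congr (_%:R *: _); rewrite !(incE, decE); case: (eqVneq j i)=> [->|_]; rewrite ?eqxx /=; nia.
rewrite scale0r addr0 incE eq_sym (negbTE ki) addn0.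
have [//| ei] := posnP (e i); first by rewrite scaler0.
rewrite dec_incC // [inc j (inc k _)]incC !scalerA -!natrM.
congr (_%:R *: _); rewrite !(incE, decE) (negbTE ki).
by case: (eqVneq j k)=> [->|_]; rewrite ?(negbTE ki) /=; case: (j == i)=> /=; nia.
Qed.

Lemma dxB k (h1 h2 : exps m -> 'cV[C]_n) e :
  dx k (fun e0 => h1 e0 - h2 e0) e = dx k h1 e - dx k h2 e.
Proof. exact: scalerBr. Qed.

Lemma lie_xd_at0 phi i j h : lie_xd phi i j h (exps0 m) = phi i j *m h (exps0 m).
Proof. by rewrite /lie_xd /mulx ffunE add0r. Qed.

Lemma mulx_dx_diag r h e : mulx r (dx r h) e = (e r)%:R *: h e.
Proof.
rewrite /mulx /dx; have [->|er] := posnP (e r); first by rewrite scale0r.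
by rewrite decK // decE eqxx subn1 prednK.
Qed.

Lemma lie_xd_monomial phi i j b v :
  lie_xd phi i j (monomial b v) =
  fun e => (b j)%:R *: monomial (inc i (dec j b)) v e + monomial b (phi i j *m v) e.
Proof.
apply: functional_extensionality=> e; rewrite /lie_xd; congr (_ + _); last first.
  by rewrite /monomial; case: ifP; rewrite ?mulmx0.
rewrite /mulx /dx /monomial; have [bj|bj] := posnP (b j).
  rewrite bj scale0r; case: ifP=> // _; case: eqP; rewrite ?scaler0 // => eb.
  by move: (inc_gt0 j (dec i e)); rewrite eb bj.
have [ei|ei] := posnP (e i).
  case: eqP; rewrite ?scaler0 // => eb.
  by move: (inc_gt0 i (dec j b)); rewrite -eb ei.
have -> : (inc j (dec i e) == b) = (e == inc i (dec j b)).
  by apply/eqP/eqP=> [<-|->]; rewrite ?incK ?decK.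
case: eqP=> [->|_]; last by rewrite !scaler0.
by rewrite incK decE eqxx subn1 prednK.
Qed.

End DerivativeCalculus.

Lemma efact_neq0 (C : numDomainType) m (e : exps m) : (efact e)%:R != 0 :> C.
Proof. by rewrite pnatr_eq0 -lt0n efact_gt0. Qed.

Section DifferentialOperator.
Variables (C : numFieldType) (m n n' d : nat).
Implicit Types (t : exps m -> 'M[C]_(n', n)) (f : exps m -> 'cV[C]_n).

(* The operator \sum_{deg a = d} t_a \partial^a, using
   \partial^a x^(e + a) = (e + a)! / e! x^e. *)
Definition diffop t f e : 'cV[C]_n' :=
  \sum_(a <- exps_deg m d)
    ((efact (exps_add e a))%:R / (efact e)%:R) *: (t a *m f (exps_add e a)).

Lemma diffop_linear t (s : C) f g e :
  diffop t (fun e0 => s *: f e0 + g e0) e = s *: diffop t f e + diffop t g e.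
Proof.
rewrite /diffop scaler_sumr -big_split; apply: eq_bigr=> a _.
by rewrite mulmxDr -scalemxAr scalerDr !scalerA mulrC.
Qed.

Lemma diffop_linear_symbol (s : C) t1 t2 f e :
  diffop (fun b => s *: t1 b + t2 b) f e = s *: diffop t1 f e + diffop t2 f e.
Proof.
rewrite /diffop scaler_sumr -big_split; apply: eq_bigr=> a _.
by rewrite mulmxDl -scalemxAl scalerDr !scalerA mulrC.
Qed.

Lemma diffop_at0 t f :
  diffop t f (exps0 m) = \sum_(a <- exps_deg m d) (efact a)%:R *: (t a *m f a).
Proof. by apply: eq_bigr=> a _; rewrite add0exps efact0 divr1. Qed.

Lemma diffop_dx t k f e : diffop t (dx k f) e = dx k (diffop t f) e.
Proof.
rewrite /diffop /dx scaler_sumr; apply: eq_bigr=> a _.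
rewrite -scalemxAr !scalerA inc_exps_add; congr (_ *: _).
rewrite -inc_exps_add !efact_inc !natrM.
by field; rewrite nat1r pnatr_eq0 efact_neq0.
Qed.

Lemma fsupp_diffop t f : fsupp f -> fsupp (diffop t f).
Proof.
case=> s fs; exists [seq exps_sub u a | u <- s, a <- exps_deg m d]=> e De.
have : ~~ all (fun a => f (exps_add e a) == 0) (exps_deg m d).
  apply: contra De=> /allP f0; rewrite /diffop big1_seq //= => a /f0 /eqP ->.
  by rewrite mulmx0 scaler0.
rewrite -has_predC=> /hasP [a ad fa].
by rewrite -(exps_addK a e); apply: allpairs_f=> //; apply: fs.
Qed.

Lemma diffop_monomial_at0 t b v :
  diffop t (monomial b v) (exps0 m) =
  if deg b == d then (efact b)%:R *: (t b *m v) else 0.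
Proof.
rewrite diffop_at0 -mem_exps_deg.
rewrite -(@big_uniq_pred1 _ _ _ b (fun a => (efact a)%:R *: (t a *m v))) ?exps_deg_uniq //.
rewrite [RHS]big_mkcond; apply: eq_bigr=> a _; rewrite /monomial eq_sym.
by case: ifP=> _; rewrite ?mulmx0 ?scaler0.
Qed.

Lemma diffop_inj t1 t2 :
  (forall a, deg a != d -> t1 a = 0) -> (forall a, deg a != d -> t2 a = 0) ->
  (forall f, fsupp f -> forall e, diffop t1 f e = diffop t2 f e) -> t1 =1 t2.
Proof.
move=> t1d t2d t12 b; have [bd|bd] := eqVneq (deg b) d; last by rewrite t1d ?t2d.
apply/eqP; rewrite -subr_eq0; apply/eqP/mulmx_cV_eq0=> v.
have := t12 _ (fsupp_monomial b v) (exps0 m).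
rewrite !diffop_monomial_at0 bd eqxx=> /(scalerI (efact_neq0 C b)) t12b.
by rewrite mulmxBl t12b subrr.
Qed.

End DifferentialOperator.

Section InvariantSymbol.
Variables (C : numFieldType) (m n n' d : nat).
Variables (phi : 'I_m -> 'I_m -> 'M[C]_n) (phi' : 'I_m -> 'I_m -> 'M[C]_n').
Variable t : exps m -> 'M[C]_(n', n).
Hypothesis t_inv : forall i j b, tensor_act phi phi' i j t b = 0.

Lemma invariant_symbol_comm i j b : phi' i j *m t b = t b *m phi i j +
  (if (0 < b j)%N then (dec j b i).+1%:R *: t (inc i (dec j b)) else 0).
Proof.
have /eqP := t_inv i j b; rewrite /tensor_act /dop_act /hom_act addrC.
by rewrite subr_eq0 subr_eq addrC => /eqP.
Qed.

(* Both x_i \partial_{x_j}-terms are the same sum, indexed by a = x + e_i on one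
   side and by a = x + e_j on the other. *)
Lemma diffop_lie_xd_at0 i j g :
  diffop d t (lie_xd phi i j g) (exps0 m) = lie_xd phi' i j (diffop d t g) (exps0 m).
Proof.
rewrite lie_xd_at0 !diffop_at0 mulmx_sumr.
pose G x := ((efact x)%:R * (x i).+1%:R * (x j).+1%:R) *: (t (inc i x) *m g (inc j x)).
transitivity (\sum_(a <- exps_deg m d) ((if (0 < a i)%N then G (dec i a) else 0)
   + (efact a)%:R *: (t a *m phi i j *m g a))).
  apply: eq_bigr=> a _; rewrite /lie_xd mulmxDr scalerDr mulmxA; congr (_ + _).
  rewrite /mulx /dx; case: ifP=> ai; last by rewrite mulmx0 scaler0.
  move: (decK ai); move: (dec i a)=> x <-; rewrite /G.
  by rewrite efact_inc natrM -scalemxAr scalerA.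
transitivity (\sum_(a <- exps_deg m d) ((if (0 < a j)%N then G (dec j a) else 0)
   + (efact a)%:R *: (t a *m phi i j *m g a))); last first.
  apply: eq_bigr=> a _; rewrite -scalemxAr mulmxA invariant_symbol_comm.
  rewrite mulmxDl scalerDr addrC; congr (_ + _); case: ifP=> aj; last by rewrite mul0mx scaler0.
  move: (decK aj); move: (dec j a)=> x <-; rewrite /G.
  by rewrite efact_inc natrM -scalemxAl scalerA mulrAC.
by rewrite !big_split /= -!big_mkcond (big_exps_deg_dec d i j).
Qed.

(* The two sides differ by a map commuting with every \partial_{x_k}: the
   commutators [\partial_{x_k}, x_i \partial_{x_j}] = (k == i) \partial_{x_j} cancel. *)
Lemma diffop_lie_xd i j g : fsupp g ->
  forall e, diffop d t (lie_xd phi i j g) e = lie_xd phi' i j (diffop d t g) e.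
Proof.
move=> gs e; apply/eqP; rewrite -subr_eq0; apply/eqP; move: g gs e.
apply: (commutes_dx_eq0
  (U := fun g e => diffop d t (lie_xd phi i j g) e - lie_xd phi' i j (diffop d t g) e)).
  move=> k g gs e /=.
  have -> : lie_xd phi i j (dx k g) =
      fun e0 => - (k == i)%:R *: dx j g e0 + dx k (lie_xd phi i j g) e0.
    by apply: functional_extensionality=> e0; rewrite dx_lie_xd scaleNr addrC addrK.
  have -> : diffop d t (dx k g) = dx k (diffop d t g).
    by apply: functional_extensionality=> e0; rewrite diffop_dx.
  have regroup (x a b : 'cV[C]_n') : - x + a - b = a - (b + x).
    by rewrite opprD addrA addrAC [_ + a]addrC.
  by rewrite diffop_linear !diffop_dx dxB dx_lie_xd scaleNr regroup.
by move=> g gs /=; apply/eqP; rewrite subr_eq0 diffop_lie_xd_at0.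
Qed.

Lemma is_bhom_diffop : is_bhom phi phi' (diffop d t).
Proof.
split=> [f|a f g _ _ e|k f _ e|i j f fs e].
- exact: fsupp_diffop.
- exact: diffop_linear.
- exact: diffop_dx.
- exact: diffop_lie_xd.
Qed.

End InvariantSymbol.

Section HomomorphismSymbol.
Variables (C : numFieldType) (m n n' : nat).
Variables (phi : 'I_m -> 'I_m -> 'M[C]_n) (phi' : 'I_m -> 'I_m -> 'M[C]_n').
Variables (c c' : C).
Hypothesis phi_euler : \sum_(r < m) phi r r = c%:M.
Hypothesis phi'_euler : \sum_(r < m) phi' r r = c'%:M.
Variable T : (exps m -> 'cV[C]_n) -> exps m -> 'cV[C]_n'.
Hypothesis T_bhom : is_bhom phi phi' T.

Let T_linear : fsupp_linear T. Proof. by case: T_bhom. Qed.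
Let T_dx : commutes_dx T. Proof. by case: T_bhom. Qed.
Let T_lie_xd i j f : fsupp f -> forall e, T (lie_xd phi i j f) e = lie_xd phi' i j (T f) e.
Proof. by case: T_bhom=> _ _ _; apply. Qed.

Lemma euler_monomial a v : ((deg a)%:R + c - c') *: T (monomial a v) (exps0 m) = 0.
Proof.
have euler : (fun e => \sum_(r <- index_enum 'I_m) 1 *: lie_xd phi r r (monomial a v) e) =
             fun e => ((deg a)%:R + c) *: monomial a v e.
  apply: functional_extensionality=> e.
  under eq_bigr do rewrite scale1r /lie_xd mulx_dx_diag.
  rewrite big_split /= -mulmx_suml phi_euler mul_scalar_mx -scaler_suml -natr_sum.
  by rewrite scalerDl; congr (_ + _); rewrite /monomial; case: eqP=> [->|]; rewrite ?scaler0.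
have := flinear_sum T_linear (index_enum 'I_m) (fun _ => 1)
  (fun r => fsupp_lie_xd phi r r (fsupp_monomial a v)) (exps0 m).
rewrite euler (flinearZ T_linear _ (fsupp_monomial a v)).
rewrite (eq_bigr (fun r => phi' r r *m T (monomial a v) (exps0 m))) => [|r _]; last first.
  by rewrite scale1r (T_lie_xd _ _ (fsupp_monomial a v)) lie_xd_at0.
rewrite -mulmx_suml phi'_euler mul_scalar_mx=> /eqP.
by rewrite -subr_eq0 -scalerBl=> /eqP.
Qed.

Lemma bhom_monomial_at0 a v : (deg a)%:R + c - c' != 0 -> T (monomial a v) (exps0 m) = 0.
Proof. by move=> ac; have /eqP := euler_monomial a v; rewrite scaler_eq0 (negbTE ac)=> /eqP. Qed.

Lemma bhom_eq0 : ~ (exists d : nat, c' - c = d%:R) -> forall f, fsupp f -> forall e, T f e = 0.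
Proof.
move=> cN; apply: commutes_dx_eq0=> // g gs.
have [s [_ _ ->]] := flinear_monomials T_linear gs.
rewrite big1 // => a _; apply: bhom_monomial_at0; apply/eqP=> ac; apply: cN.
by exists (deg a); rewrite -[c' - c]addr0 -ac; ring.
Qed.

Definition symbol_of (a : exps m) : 'M[C]_(n', n) :=
  (efact a)%:R^-1 *: \matrix_(r, k) T (monomial a (delta_mx k 0)) (exps0 m) r 0.

Lemma symbol_ofE a v : (efact a)%:R *: (symbol_of a *m v) = T (monomial a v) (exps0 m).
Proof.
rewrite -scalemxAl scalerA mulfV ?efact_neq0 // scale1r.
have -> : monomial a v = fun e => \sum_(k <- index_enum 'I_n) v k 0 *: monomial a (delta_mx k 0) e.
  apply: functional_extensionality=> e; rewrite /monomial; case: ifP=> _; last first.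
    by rewrite big1 // => k _; rewrite scaler0.
  apply/matrixP=> r s; rewrite (ord1 s) summxE (bigD1 r) //= big1 => [|k kr]; rewrite !mxE.
    by rewrite !eqxx mulr1 addr0.
  by rewrite eq_sym (negbTE kr) mulr0.
rewrite (flinear_sum T_linear) => [|k]; last exact: fsupp_monomial.
apply/matrixP=> r s; rewrite (ord1 s) !mxE summxE; apply: eq_bigr=> k _.
by rewrite !mxE mulrC.
Qed.

Variable d : nat.
Hypothesis cd : c' - c = d%:R.

Lemma bhom_monomial_deg a v : deg a != d -> T (monomial a v) (exps0 m) = 0.
Proof. by move=> ad; rewrite bhom_monomial_at0 // -addrA -opprB cd subr_eq0 eqr_nat. Qed.

Lemma symbol_of_deg a : deg a != d -> symbol_of a = 0.
Proof. by move=> ad; apply/matrixP=> r k; rewrite !mxE bhom_monomial_deg // !mxE mulr0. Qed.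

Lemma bhom_eq_diffop f : fsupp f -> forall e, T f e = diffop d symbol_of f e.
Proof.
move=> fs e; apply/eqP; rewrite -subr_eq0; apply/eqP; move: f fs e.
apply: (commutes_dx_eq0 (U := fun g e => T g e - diffop d symbol_of g e)).
  by move=> k g gs e /=; rewrite T_dx // diffop_dx dxB.
move=> g gs /=; apply/eqP; rewrite subr_eq0; apply/eqP.
have [s [us gs' ->]] := flinear_monomials T_linear gs.
rewrite diffop_at0; under [RHS]eq_bigr do rewrite symbol_ofE.
apply: eq_big_supp_uniq=> //; first exact: exps_deg_uniq.
  move=> a; apply: contraR=> as'.
  have -> : g a = 0 by apply/eqP; apply: contraR as'; apply: gs'.
  by rewrite monomial0 flinear0.
by move=> a; apply: contraR; rewrite mem_exps_deg=> ad; rewrite bhom_monomial_deg.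
Qed.

(* Evaluating the b_m-equivariance of T at the constant term of x^b v is exactly
   the l_m-invariance of its symbol at b. *)
Lemma symbol_of_invariant : is_invariant phi phi' d symbol_of.
Proof.
split=> [a|i j b]; first exact: symbol_of_deg.
suff : (efact b)%:R *: tensor_act phi phi' i j symbol_of b = 0.
  by move/eqP; rewrite scaler_eq0 (negbTE (efact_neq0 C b))=> /eqP.
apply: mulmx_cV_eq0=> v.
have := T_lie_xd i j (fsupp_monomial b v) (exps0 m).
rewrite lie_xd_monomial T_linear; try exact: fsupp_monomial.
rewrite lie_xd_at0 -!symbol_ofE -scalemxAr.
rewrite /tensor_act /dop_act /hom_act.
have [bj|bj] := posnP (b j).
  rewrite bj scale0r add0r oppr0 add0r=> E.
  by rewrite -scalemxAl mulmxBl scalerBr -!mulmxA E subrr.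
rewrite -scalemxAl mulmxDl mulmxBl scalerDr scalerBr -!mulmxA=> <-.
rewrite addrK mulNmx -scalemxAl !scalerA scalerN addrC scalerA.
apply/eqP; rewrite subr_eq0; apply/eqP; congr (_ *: _).
move: (decK bj); move: (dec j b)=> x <-.
by rewrite !efact_inc incE eqxx addn1 !natrM mulrA [_ * (efact x)%:R]mulrC.
Qed.

End HomomorphismSymbol.

Unset Implicit Arguments.

Theorem mainTheorem9 (C : numClosedFieldType) (m n n' : nat)
  (phi : 'I_m -> 'I_m -> 'M[C]_n) (phi' : 'I_m -> 'I_m -> 'M[C]_n')
  (c c' : C) :
  is_lm_rep phi -> is_lm_rep phi' ->
  \sum_(r < m) phi r r = c%:M -> \sum_(r < m) phi' r r = c'%:M ->
  (~ (exists d : nat, c' - c = d%:R) ->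
     forall T, is_bhom phi phi' T ->
       forall f, fsupp f -> forall e, T f e = 0) /\
  (forall d : nat, c' - c = d%:R ->
     exists Phi : (exps m -> 'M[C]_(n', n)) ->
                  (exps m -> 'cV[C]_n) -> (exps m -> 'cV[C]_n'),
       [/\ forall t, is_invariant phi phi' d t -> is_bhom phi phi' (Phi t),
           forall (a : C) t1 t2, is_invariant phi phi' d t1 -> is_invariant phi phi' d t2 ->
             forall f, fsupp f -> forall e,
               Phi (fun b => a *: t1 b + t2 b) f e = a *: Phi t1 f e + Phi t2 f e,
           forall t1 t2, is_invariant phi phi' d t1 -> is_invariant phi phi' d t2 ->
             (forall f, fsupp f -> forall e, Phi t1 f e = Phi t2 f e) ->
             forall b, t1 b = t2 b
         & forall T, is_bhom phi phi' T ->
             exists2 t, is_invariant phi phi' d t &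
               forall f, fsupp f -> forall e, T f e = Phi t f e]).
Proof.
move=> _ _ euler euler'; split=> [cN T T_bhom | d cd].
  exact: (bhom_eq0 euler euler' T_bhom cN).
exists (diffop d); split.
- by move=> t [_ t_inv]; apply: is_bhom_diffop.
- by move=> a t1 t2 _ _ f _ e; apply: diffop_linear_symbol.
- by move=> t1 t2 [t1d _] [t2d _]; apply: diffop_inj.
- move=> T T_bhom; exists (symbol_of T).
    exact: (symbol_of_invariant euler euler' T_bhom cd).
  exact: (bhom_eq_diffop euler euler' T_bhom cd).
Qed.
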